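(* Let $\mathcal{B}$ be an algebra in a functional language $\mathcal{L}$ and let $\Lambda^{\mathcal{B}}$ be the direct system of formulas associated with $\mathcal{B}$ (described in the context). Then $L(\Lambda^{\mathcal{B}})\cong\mathcal{B}$.
   Context: Functional language: operation symbols $F$ (arity $n_F$) and constants only. A diagram-formula in a finite reduct $\mathcal{L}'$ in finite variables $X$ is a conjunction of atomic formulas and negations such that $\neg(x=y)$ is a conjunct for distinct $x,y\in X$, for each $F\in\mathcal{L}'$ and $(x_0,\dots,x_{n_F})\in X^{n_F+1}$ exactly one of $F(x_1,\dots,x_{n_F})=x_0$ and its negation is a conjunct, and for each constant $c\in\mathcal{L}'$ and $x\in X$ exactly one of $x=c$, $\neg(x=c)$ is a conjunct. A direct system of formulas $\Lambda=(I,\varphi_i,\gamma_{ij})$: $(I,\le)$ directed; $\varphi_i$ consistent diagram-formulas in finite reducts $\mathcal{L}_i$ and finite variables $X_i$; maps $\gamma_{ij}:X_i\to X_j$ ($i\le j$) with $\gamma_{ii}=\mathrm{id}$, $\gamma_{jk}\gamma_{ij}=\gamma_{ik}$, conjuncts of $\varphi_i(\gamma_{ij}(X_i))$ are conjuncts of $\varphi_j$; every constant appears in a conjunct $x=c$ of some $\varphi_i$; for all $F,i,(x_1,\dots,x_{n_F})\in X_i^{n_F}$ some $j\ge i$ has a conjunct $F(\gamma_{ij}(x_1),\dots)=x_j$. Its limit algebra $L(\Lambda)$ has universe $\{(x,i):x\in X_i\}/\!\equiv$, $(x,i)\equiv(y,j)$ iff $\gamma_{ik}(x)=\gamma_{jk}(y)$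 for some $k\ge i,j$, with constants/operations read off from the conjuncts $x=c$ and $F(\dots)=x_j$. The system $\Lambda^{\mathcal{B}}$: take variables $X=\{x_b:b\in B\}$; $I$ is the set of pairs $(\mathcal{L}',X')$ with $\mathcal{L}'$ a finite reduct of $\mathcal{L}$ and $X'$ a finite subset of $X$, ordered by $(\mathcal{L}',X')\le(\mathcal{L}'',X'')$ iff $\mathcal{L}'\subseteq\mathcal{L}''$ and $X'\subseteq X''$; $\varphi_{(\mathcal{L}',X')}$ is the diagram-formula in $\mathcal{L}'$ and $X'$ consisting of exactly those conjuncts (among $x_b\ne x_{b'}$, $x_b=c$ or its negation, $F(x_{b_1},\dots,x_{b_{n_F}})=x_{b_0}$ or its negation, for $c,F\in\mathcal{L}'$ and variables in $X'$) that are true in $\mathcal{B}$ under $x_b\mapsto b$; all maps $\gamma$ are inclusions $x_b\mapsto x_b$. This is a direct system of formulas. *)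

From mathcomp Require Import all_boot.
Set Implicit Arguments. Unset Strict Implicit. Unset Printing Implicit Defensive.

Record language := Language {
  Fsym : Type;
  arity : Fsym -> nat;
  Csym : Type
}.

Record algebra (L : language) := Algebra {
  carrier :> Type;
  cst : Csym L -> carrier;
  op : forall F : Fsym L, ('I_(arity F) -> carrier) -> carrier
}.

(* Literals that may occur as conjuncts of a diagram-formula over variables V:
   ~(x = y), x = c, ~(x = c), F(x_1..x_n) = x_0, ~(F(x_1..x_n) = x_0). *)
Inductive lit (L : language) (V : Type) :=
| LNeqV (x y : V)
| LEqC (x : V) (c : Csym L)
| LNeqC (x : V) (c : Csym L)
| LEqF (F : Fsym L) (xs : 'I_(arity F) -> V) (x0 : V)
| LNeqF (F : Fsym L) (xs : 'I_(arity F) -> V) (x0 : V).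

(* A system of formulas (the data (I, <=, X_i, phi_i, gamma_ij)); a formula
   phi_i is represented by the set of its conjuncts. gamma_ij is given for
   i <= j. *)
Record fsystem (L : language) := FSystem {
  idx : Type;
  ile : idx -> idx -> Prop;
  var : idx -> Type;
  phi : forall i, lit L (var i) -> Prop;
  gam : forall i j, ile i j -> var i -> var j
}.

Definition lelem L (S : fsystem L) := {i : idx S & var i}.

Definition lequiv L (S : fsystem L) (u v : lelem S) : Prop :=
  exists k (hu : ile (projT1 u) k) (hv : ile (projT1 v) k),
    gam hu (projT2 u) = gam hv (projT2 v).

(* universe of L(Lambda): equivalence classes of pairs (x, i) *)
Definition lcarrier L (S : fsystem L) :=
  {P : lelem S -> Prop | exists u, P = lequiv u}.

Definition lcls L (S : fsystem L) (u : lelem S) : lcarrier S :=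
  exist _ (lequiv u) (ex_intro _ u erefl).

Definition lcst L (S : fsystem L) (c : Csym L) (a : lcarrier S) : Prop :=
  exists i (x : var i), phi (LEqC x c) /\ a = lcls (existT _ i x).

Definition lop L (S : fsystem L) (F : Fsym L)
    (args : 'I_(arity F) -> lcarrier S) (a0 : lcarrier S) : Prop :=
  exists j (xs : 'I_(arity F) -> var j) (x0 : var j),
    phi (LEqF xs x0) /\ (forall k, args k = lcls (existT _ j (xs k)))
    /\ a0 = lcls (existT _ j x0).

Definition limit_iso L (S : fsystem L) (B : algebra L) : Prop :=
  exists h : lcarrier S -> B,
    bijective h /\
    (forall c a, @lcst L S c a <-> h a = @cst L B c) /\
    (forall F args a0, @lop L S F args a0 <-> h a0 = @op L B F (fun k => h (args k))).

Definition finite_pred (T : Type) (P : T -> Prop) : Prop :=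
  exists n (e : 'I_n -> T), forall x, P x -> exists k, e k = x.

Definition fsub (T : Type) := {P : T -> Prop | finite_pred P}.

(* index set of Lambda^B: pairs (L', X') with L' a finite reduct and X' a
   finite set of variables x_b (variable x_b is identified with b). *)
Definition BIdx L (B : algebra L) :=
  (fsub (Fsym L) * fsub (Csym L) * fsub B)%type.

Definition BF L (B : algebra L) (i : BIdx B) := sval i.1.1.
Definition BC L (B : algebra L) (i : BIdx B) := sval i.1.2.
Definition BX L (B : algebra L) (i : BIdx B) := sval i.2.

Definition Ble L (B : algebra L) (i j : BIdx B) : Prop :=
  [/\ forall F, BF i F -> BF j F,
      forall c, BC i c -> BC j c &
      forall b, BX i b -> BX j b].

Definition Bvar L (B : algebra L) (i : BIdx B) := {b : B | BX i b}.

Definition Bphi L (B : algebra L) (i : BIdx B) (l : lit L (Bvar i)) : Prop :=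
  match l with
  | LNeqV x y => sval x <> sval y
  | LEqC x c => BC i c /\ sval x = @cst L B c
  | LNeqC x c => BC i c /\ sval x <> @cst L B c
  | LEqF F xs x0 => BF i F /\ @op L B F (fun k => sval (xs k)) = sval x0
  | LNeqF F xs x0 => BF i F /\ @op L B F (fun k => sval (xs k)) <> sval x0
  end.

Definition Bgam L (B : algebra L) (i j : BIdx B) (h : Ble i j)
    (x : Bvar i) : Bvar j :=
  let: And3 _ _ hX := h in exist _ (sval x) (hX _ (svalP x)).

Definition LambdaB L (B : algebra L) : fsystem L :=
  @FSystem L (BIdx B) (@Ble L B) (@Bvar L B) (@Bphi L B) (@Bgam L B).

From Stdlib Require Import ProofIrrelevance FunctionalExtensionality.
From Stdlib Require Import PropExtensionality ClassicalEpsilon.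
From mathcomp Require Import all_boot.

(* In Lambda^B a pair (x_b, i) can only be moved along inclusions, which keep
   b, and any two indices have their union as a common upper bound; hence two
   pairs are identified in the limit exactly when they name the same element
   of B, and (x_b, i) |-> b is a well-defined injection of L(Lambda^B) into B.
   It is onto because ({}, {}, {b}) is an index. Since phi_i lists precisely
   the conjuncts true in B, the constants and operations read off in the limit
   are those of B; conversely a true equation x = c or F(x_1..x_n) = x_0 is
   witnessed by the finite index containing c (or F) and the elements named. *)

Lemma sig_eq (T : Type) (P : T -> Prop) (x y : {t | P t}) : sval x = sval y -> x = y.
Proof.
by case: x y => [x px] [y py] /= exy; subst y; rewrite (proof_irrelevance _ px py).
Qed.

Lemma lcarrier_cls {L} {S : fsystem L} (a : lcarrier S) : exists u, a = lcls u.
Proof. by case: a => P [u defP]; exists u; apply: sig_eq. Qed.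

Section FiniteSubsets.
Variable T : Type.

Definition fsub0 : fsub T.
Proof.
exists (fun _ => False); exists 0, (fun k : 'I_0 => False_rect T (notF (ltn_ord k))).
by [].
Defined.

Definition fsub1 (a : T) : fsub T.
Proof. by exists (eq^~ a); exists 1, (fun _ => a) => _ ->; exists ord0. Defined.

Definition fsub_codom n (e : 'I_n -> T) : fsub T.
Proof. by exists (fun y => exists k, e k = y); exists n, e. Defined.

Definition fsubU (A1 A2 : fsub T) : fsub T.
Proof.
exists (fun y => sval A1 y \/ sval A2 y).
case: A1 A2 => [P1 [n1 [e1 onto1]]] [P2 [n2 [e2 onto2]]] /=.
exists (n1 + n2), (fun k => match split k with inl k1 => e1 k1 | inr k2 => e2 k2 end).
move=> x [/onto1 [k <-] | /onto2 [k <-]].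
- by exists (lshift n2 k); rewrite -[lshift n2 k]/(unsplit (inl k)) unsplitK.
- by exists (rshift n1 k); rewrite -[rshift n1 k]/(unsplit (inr k)) unsplitK.
Defined.

End FiniteSubsets.

Arguments fsub1 {T}.
Arguments fsub_codom {T n}.
Arguments fsubU {T}.

Section LimitOfDiagramSystem.
Variables (L : language) (B : algebra L).

Local Notation S := (LambdaB B).

Definition Bjoin (i j : BIdx B) : BIdx B :=
  (fsubU i.1.1 j.1.1, fsubU i.1.2 j.1.2, fsubU i.2 j.2).

Lemma Ble_joinl i j : Ble i (Bjoin i j).
Proof. by split=> x; left. Qed.

Lemma Ble_joinr i j : Ble j (Bjoin i j).
Proof. by split=> x; right. Qed.

Lemma Bgam_val {i j} (hij : Ble i j) (x : Bvar i) : sval (@Bgam L B i j hij x) = sval x.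
Proof. by case: hij. Qed.

Definition lelem_val (u : lelem S) : B := sval (projT2 u : Bvar (projT1 u)).

Lemma lequivE u v : lequiv u v <-> lelem_val u = lelem_val v.
Proof.
split=> [[k [hu [hv eq_uv]]] | eq_uv].
  by rewrite /lelem_val -(Bgam_val hu) -(Bgam_val hv); congr sval.
exists (Bjoin (projT1 u) (projT1 v)), (Ble_joinl _ _), (Ble_joinr _ _).
by apply: sig_eq; rewrite !Bgam_val.
Qed.

Lemma lcls_eqE u v : lcls u = lcls v <-> lelem_val u = lelem_val v.
Proof.
split=> [/(f_equal sval) /= eq_uv | eq_uv].
  by apply/lequivE; rewrite eq_uv; apply/lequivE.
apply: sig_eq; apply: functional_extensionality => w /=.
by apply: propositional_extensionality; rewrite !lequivE eq_uv.
Qed.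

Definition limit_val (a : lcarrier S) : B :=
  lelem_val (sval (constructive_indefinite_description _ (svalP a))).

Lemma limit_val_cls u : limit_val (lcls u) = lelem_val u.
Proof.
rewrite /limit_val; case: constructive_indefinite_description => w /= eq_w.
have : lequiv w w by apply/lequivE.
by rewrite -eq_w => /lequivE.
Qed.

Lemma cls_of_limit_val a i (x : Bvar i) :
  sval x = limit_val a -> a = @lcls L S (existT _ i x).
Proof. by have [u ->] := lcarrier_cls a; rewrite limit_val_cls => xu; apply/lcls_eqE. Qed.

Definition point_idx (Fs : fsub (Fsym L)) (Cs : fsub (Csym L)) (b : B) : BIdx B :=
  (Fs, Cs, fsub1 b).

Definition limit_point (b : B) : lcarrier S :=
  @lcls L S (existT (@Bvar L B) (point_idx (fsub0 _) (fsub0 _) b) (exist _ b erefl)).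

Lemma limit_val_bij : bijective limit_val.
Proof.
exists limit_point => [a | b]; last by rewrite /limit_point limit_val_cls.
exact/esym/cls_of_limit_val.
Qed.

Lemma limit_cstE c a : lcst c a <-> limit_val a = @cst L B c.
Proof.
split=> [[i [x [[_ xc] ->]]] | ac]; first by rewrite limit_val_cls.
exists (point_idx (fsub0 _) (fsub1 c) (limit_val a)).
exists (exist (eq^~ (limit_val a)) (limit_val a) erefl).
by split; [split | apply: cls_of_limit_val].
Qed.

Lemma limit_opE F args a0 :
  @lop L S F args a0 <-> limit_val a0 = @op L B F (fun k => limit_val (args k)).
Proof.
split=> [[j [xs [x0 [[_ opx] [eq_args ->]]]]] | opa].
  rewrite limit_val_cls /lelem_val /= -opx; congr (@op L B F _).
  by apply: functional_extensionality => k; rewrite eq_args limit_val_cls.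
pose X := fsubU (fsub1 (limit_val a0)) (fsub_codom (fun k => limit_val (args k))).
pose i : BIdx B := (fsub1 F, fsub0 _, X).
exists i, (fun k => exist (sval X) (limit_val (args k)) (or_intror (ex_intro _ k erefl))).
exists (exist (sval X) (limit_val a0) (or_introl erefl)).
by split; [split | split=> [k|]; apply: cls_of_limit_val].
Qed.

End LimitOfDiagramSystem.

Theorem mainTheorem12 (L : language) (B : algebra L) :
  limit_iso (LambdaB B) B.
Proof.
exists (@limit_val L B).
by split; [apply: limit_val_bij | split; [apply: limit_cstE | apply: limit_opE]].
Qed.
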